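(* Let $\lambda \in \Omega_o$. Then there exists a feasible solution $(\lambda', \mathbf{s}^{-\prime}, \mathbf{s}^{+\prime}, \delta', \boldsymbol{\alpha}', \gamma')$ of model (MIP) (defined in the context) such that $\mathbf{1}^T\boldsymbol{\alpha}' = n^+(\lambda)$, where $n^+(v)$ denotes the number of positive components of a vector $v$.
   Context: Data envelopment analysis setting. There are $n$ decision making units (DMUs) indexed by $J=\{1,\dots,n\}$, each using $m$ inputs to produce $s$ outputs; DMU$_j$ has input vector $\mathbf{x}_j=(x_{1j},\dots,x_{mj})^T\in\mathbb{R}^m_+$ and output vector $\mathbf{y}_j=(y_{1j},\dots,y_{sj})^T\in\mathbb{R}^s_+$; $\mathbf{X}=[\mathbf{x}_1\cdots\mathbf{x}_n]$, $\mathbf{Y}=[\mathbf{y}_1\cdots\mathbf{y}_n]$. Define $\mathbf{R}^-=(R^-_1,\dots,R^-_m)^T$, $\mathbf{R}^+=(R^+_1,\dots,R^+_s)^T$ by $1/R^-_i=\max_{j}x_{ij}-\min_j x_{ij}$ and $1/R^+_r=\max_j y_{rj}-\min_j y_{rj}$. For $o\in J$, the RAM model is: $\rho_o=\min\, 1-\frac{1}{m+s}(\mathbf{R}^{-T}\mathbf{s}^-+\mathbf{R}^{+T}\mathbf{s}^+)$ subject to $\mathbf{X}\lambda+\mathbf{s}^-=\mathbf{x}_o$, $\mathbf{Y}\lambda-\mathbf{s}^+=\mathbf{y}_o$, $\mathbf{1}^T\lambda=1$, $\lambda\ge 0,\mathbf{s}^-\ge0,\mathbf{s}^+\ge0$.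 A DMU is RAM-efficient if its optimal value $\rho$ equals $1$; let $E\subseteq J$ be the index set of RAM-efficient DMUs and $\mathbf{X}_E,\mathbf{Y}_E$ the submatrices of $\mathbf{X},\mathbf{Y}$ with columns in $E$. Fix the evaluated DMU $o\in J$. System (S): vectors $\lambda\in\mathbb{R}^{|E|}$, $\mathbf{s}^-\in\mathbb{R}^m$, $\mathbf{s}^+\in\mathbb{R}^s$, all nonnegative, with $\mathbf{X}_E\lambda+\mathbf{s}^-=\mathbf{x}_o$, $\mathbf{Y}_E\lambda-\mathbf{s}^+=\mathbf{y}_o$, $\mathbf{1}^T\lambda=1$, $\mathbf{R}^{-T}\mathbf{s}^-+\mathbf{R}^{+T}\mathbf{s}^+=(m+s)(1-\rho_o)$. Let $\Omega_o$ be the set of all $\lambda$ for which there exist $\mathbf{s}^-,\mathbf{s}^+$ such that $(\lambda,\mathbf{s}^-,\mathbf{s}^+)$ satisfies (S). Model (MIP): maximize $\mathbf{1}^T\boldsymbol{\alpha}+\gamma$ over $\lambda\in\mathbb{R}^{|E|}$, $\mathbf{s}^-\in\mathbb{R}^m$, $\mathbf{s}^+\in\mathbb{R}^s$, $\delta\in\mathbb{R}$, $\boldsymbol{\alpha}\in\{0,1\}^{|E|}$, $\gamma\in\{0,1\}$ subject to $\mathbf{X}_E\lambda+\mathbf{s}^--\mathbf{x}_o\delta=\mathbf{0}$, $\mathbf{Y}_E\lambda-\mathbf{s}^+-\mathbf{y}_o\delta=\mathbf{0}$, $\mathbf{1}^T\lambda-\delta=0$, $\mathbf{R}^{-T}\mathbf{s}^-+\mathbf{R}^{+T}\mathbf{s}^+-(m+s)(1-\rho_o)\delta=0$,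 $\boldsymbol{\alpha}\le\lambda$, $\gamma\le\delta$, $\lambda\ge\mathbf{0}$, $\mathbf{s}^-\ge\mathbf{0}$, $\mathbf{s}^+\ge\mathbf{0}$, $\delta\ge0$. *)

From HB Require Import structures.
From mathcomp Require Import all_boot all_order all_algebra.
From mathcomp Require Import boolp classical_sets reals.
Set Implicit Arguments. Unset Strict Implicit. Unset Printing Implicit Defensive.
Import Order.TTheory GRing.Theory Num.Theory.
Local Open Scope ring_scope.

Section DEA.
Variable R : realType.

Definition rng (n : nat) (f : 'I_n -> R) : R :=
  match n return ('I_n -> R) -> R with
  | 0 => fun _ => 0
  | n'.+1 => fun f => \big[Num.max/f ord0]_(j < n'.+1) f j
                     - \big[Num.min/f ord0]_(j < n'.+1) f j
  end f.

Variables (m s n : nat) (X : 'I_m -> 'I_n -> R) (Y : 'I_s -> 'I_n -> R).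

Definition Rin (i : 'I_m) : R := (rng (X i))^-1.
Definition Rout (r : 'I_s) : R := (rng (Y r))^-1.

Definition slack_val (sm : 'I_m -> R) (sp : 'I_s -> R) : R :=
  \sum_(i < m) Rin i * sm i + \sum_(r < s) Rout r * sp r.

Definition ram_feasible (o : 'I_n) (lam : 'I_n -> R) (sm : 'I_m -> R)
    (sp : 'I_s -> R) : Prop :=
  [/\ (forall i, \sum_(j < n) X i j * lam j + sm i = X i o),
      (forall r, \sum_(j < n) Y r j * lam j - sp r = Y r o),
      \sum_(j < n) lam j = 1,
      (forall j, 0 <= lam j) & (forall i, 0 <= sm i) /\ (forall r, 0 <= sp r)].

Definition ram_rho (o : 'I_n) : R :=
  inf [set v : R | exists lam sm sp, ram_feasible o lam sm sp /\
        v = 1 - (m + s)%:R^-1 * slack_val sm sp].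

Definition Eset : {set 'I_n} := [set j : 'I_n | ram_rho j == 1].
Definition Etype := {j : 'I_n | j \in Eset}.

Definition systemS (o : 'I_n) (lam : Etype -> R) (sm : 'I_m -> R)
    (sp : 'I_s -> R) : Prop :=
  (forall j, 0 <= lam j) /\ (forall i, 0 <= sm i) /\ (forall r, 0 <= sp r) /\
  (forall i, \sum_(j : Etype) X i (val j) * lam j + sm i = X i o) /\
  (forall r, \sum_(j : Etype) Y r (val j) * lam j - sp r = Y r o) /\
  \sum_(j : Etype) lam j = 1 /\
  slack_val sm sp = (m + s)%:R * (1 - ram_rho o).

Definition Omega (o : 'I_n) (lam : Etype -> R) : Prop :=
  exists sm sp, systemS o lam sm sp.

Definition mip_feasible (o : 'I_n) (lam : Etype -> R) (sm : 'I_m -> R)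
    (sp : 'I_s -> R) (delta : R) (alpha : Etype -> R) (gamma : R) : Prop :=
  (forall i, \sum_(j : Etype) X i (val j) * lam j + sm i - X i o * delta = 0) /\
  (forall r, \sum_(j : Etype) Y r (val j) * lam j - sp r - Y r o * delta = 0) /\
  \sum_(j : Etype) lam j - delta = 0 /\
  slack_val sm sp - (m + s)%:R * (1 - ram_rho o) * delta = 0 /\
  (forall j, alpha j = 0 \/ alpha j = 1) /\
  (gamma = 0 \/ gamma = 1) /\
  (forall j, alpha j <= lam j) /\
  gamma <= delta /\
  (forall j, 0 <= lam j) /\ (forall i, 0 <= sm i) /\ (forall r, 0 <= sp r) /\
  0 <= delta.

End DEA.

Definition npos (R : realType) (T : finType) (v : T -> R) : nat :=
  #|[pred j | 0 < v j]|.

From HB Require Import structures.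
From mathcomp Require Import all_boot all_order all_algebra.
From mathcomp Require Import boolp classical_sets reals.
Import Order.TTheory GRing.Theory Num.Theory.
Local Open Scope ring_scope.

(* (MIP) is the homogenization of (S): scaling a solution of (S) by any t >= 0
   gives a solution of its equalities with delta = t.  Taking t >= 1 with
   t * lam j >= 1 whenever lam j > 0 (e.g. t = 1 + sum of the 1 / lam j) makes
   alpha = the indicator of the support of lam and gamma = 1 admissible. *)

Lemma exists_scale_ge_inv (R : numFieldType) (T : finType) (v : T -> R) :
  exists2 t : R, 1 <= t & forall j, 0 < v j -> 1 <= t * v j.
Proof.
set inv_pos := fun j => if 0 < v j then (v j)^-1 else 0.
have inv_pos_ge0 j : 0 <= inv_pos j.
  by rewrite /inv_pos; case: ifP => // /ltW; rewrite invr_ge0.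
exists (\sum_j inv_pos j + 1); first by rewrite lerDr sumr_ge0.
move=> j vj_gt0; rewrite -[leLHS](mulVf (lt0r_neq0 vj_gt0)) ler_wpM2r ?(ltW vj_gt0) //.
by rewrite (bigD1 j) //= {1}/inv_pos vj_gt0 -addrA lerDl addr_ge0 ?sumr_ge0.
Qed.

Lemma sum_indicator_pos (R : realType) (T : finType) (v : T -> R) :
  \sum_j (if 0 < v j then 1 else 0 : R) = (npos v)%:R.
Proof.
by rewrite -big_mkcond /= sumr_const /npos cardE; congr (size _)%:R;
  apply: eq_enum => j; rewrite !inE.
Qed.

Section ScaledSolution.
Variables (R : realType) (m s n : nat).
Variables (X : 'I_m -> 'I_n -> R) (Y : 'I_s -> 'I_n -> R) (o : 'I_n).

Lemma slack_valZ (t : R) (sm : 'I_m -> R) (sp : 'I_s -> R) :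
  slack_val X Y (fun i => t * sm i) (fun r => t * sp r) = t * slack_val X Y sm sp.
Proof.
by rewrite /slack_val mulrDr !mulr_sumr; congr (_ + _);
  apply: eq_bigr => *; rewrite mulrCA.
Qed.

Lemma systemS_scale_mip_feasible (lam : Etype X Y -> R) sm sp (t : R) :
  systemS o lam sm sp -> 1 <= t -> (forall j, 0 < lam j -> 1 <= t * lam j) ->
  mip_feasible o (fun j => t * lam j) (fun i => t * sm i) (fun r => t * sp r)
    t (fun j => if 0 < lam j then 1 else 0) 1.
Proof.
move=> [lam_ge0 [sm_ge0 [sp_ge0 [eqX [eqY [lam_sum eq_slack]]]]]] t_ge1 t_lam.
have t_ge0 : 0 <= t := le_trans ler01 t_ge1.
have scaled_sum (c : Etype X Y -> R) :
    \sum_j c j * (t * lam j) = t * \sum_j c j * lam j.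
  by rewrite mulr_sumr; apply: eq_bigr => j _; rewrite mulrCA.
do ![split].
- by move=> i; rewrite scaled_sum -mulrDr eqX mulrC subrr.
- by move=> r; rewrite scaled_sum -mulrBr eqY mulrC subrr.
- by rewrite -mulr_sumr lam_sum mulr1 subrr.
- by rewrite slack_valZ eq_slack mulrC subrr.
- by move=> j; case: ifP; [right|left].
- by right.
- move=> j; case: ifPn => [/t_lam //|_]; exact: mulr_ge0.
- exact: t_ge1.
- by move=> j; apply: mulr_ge0.
- by move=> i; apply: mulr_ge0.
- by move=> r; apply: mulr_ge0.
- exact: t_ge0.
Qed.

End ScaledSolution.

Theorem lemma1 (R : realType) (m s n : nat)
    (X : 'I_m -> 'I_n -> R) (Y : 'I_s -> 'I_n -> R)
    (HX : forall i j, 0 <= X i j) (HY : forall r j, 0 <= Y r j)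
    (o : 'I_n) (lam : Etype X Y -> R) :
  Omega o lam ->
  exists (lam' : Etype X Y -> R) (sm' : 'I_m -> R) (sp' : 'I_s -> R)
         (delta' : R) (alpha' : Etype X Y -> R) (gamma' : R),
    mip_feasible o lam' sm' sp' delta' alpha' gamma' /\
    \sum_(j : Etype X Y) alpha' j = (npos lam)%:R.
Proof.
move=> [sm [sp solS]].
have [t t_ge1 t_lam] := exists_scale_ge_inv _ _ lam.
exists (fun j => t * lam j), (fun i => t * sm i), (fun r => t * sp r), t,
  (fun j => if 0 < lam j then 1 else 0), 1.
split; first exact: systemS_scale_mip_feasible.
exact: sum_indicator_pos.
Qed.
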